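(* Let $\mathcal{X}$ be a sample space, $\mathcal{Y}$ a label set, and $y:\mathcal{X}\to\mathcal{Y}$ a deterministic labeling function. Let $p_{\mathrm{sim}}$ be a joint probability distribution on pairs $(x,x^+)\in\mathcal{X}\times\mathcal{X}$, and let $q_{\mathrm{UCL}}$ be a probability distribution on $\mathcal{X}$. Fix $\gamma\in(0,\infty)$, a representation function $f:\mathcal{X}\to S^{d-1}$ (unit sphere in $\mathbb{R}^d$), and set $g(x,x'):=f(x)^\top f(x')/\gamma$. Let $\eta:\mathbb{R}\to\mathbb{R}$ be a hardening function, i.e. nonnegative and nondecreasing on $\mathbb{R}$. For $x\in\mathcal{X}$ define $$\alpha_{\mathrm{H\text{-}UCL}}(x,f):=\mathbb{E}_{x^-\sim q_{\mathrm{UCL}}}[\eta(g(x,x^-))],$$ $$\alpha_{\mathrm{H\text{-}SCL}}(x,f):=\mathbb{E}_{x^-\sim q_{\mathrm{UCL}}}[1(y(x^-)\neq y(x))\,\eta(g(x,x^-))],$$ $$\alpha_{\mathrm{Hcol}}(x,f):=\mathbb{E}_{x^-\sim q_{\mathrm{UCL}}}[1(y(x^-)= y(x))\,\eta(g(x,x^-))],$$ and assume each of these lies in $(0,\infty)$ for all $x\in\mathcal{X}$. Define the conditional distributions $$q_{\mathrm{H\text{-}UCL}}(x^-|x,f)=\frac{\eta(g(x,x^-))\,q_{\mathrm{UCL}}(x^-)}{\alpha_{\mathrm{H\text{-}UCL}}(x,f)},\quad q_{\mathrm{H\text{-}SCL}}(x^-|x,f)=\frac{1(y(x^-)\neq y(x))\,\eta(g(x,x^-))\,q_{\mathrm{UCL}}(x^-)}{\alpha_{\mathrm{H\text{-}SCL}}(x,f)},$$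 $$q_{\mathrm{Hcol}}(x^-|x,f)=\frac{1(y(x^-)= y(x))\,\eta(g(x,x^-))\,q_{\mathrm{UCL}}(x^-)}{\alpha_{\mathrm{Hcol}}(x,f)}.$$ For a conditional negative-sampling distribution $q(\cdot|x)$ define the asymptotic InfoNCE loss $$\mathcal{L}^{(\infty)}_q(f):=\mathbb{E}_{(x,x^+)\sim p_{\mathrm{sim}}}\Big[\log\Big(1+e^{-g(x,x^+)}\,\mathbb{E}_{x^-\sim q(\cdot|x)}\big[e^{g(x,x^-)}\big]\Big)\Big],$$ and write $\mathcal{L}^{(\infty)}_{\mathrm{H\text{-}UCL}}(f)$ and $\mathcal{L}^{(\infty)}_{\mathrm{H\text{-}SCL}}(f)$ for this loss with $q=q_{\mathrm{H\text{-}UCL}}(\cdot|x,f)$ and $q=q_{\mathrm{H\text{-}SCL}}(\cdot|x,f)$ respectively. Suppose that for all $x\in\mathcal{X}$, $$\mathbb{E}_{x^-\sim q_{\mathrm{Hcol}}(\cdot|x,f)}\big[e^{g(x,x^-)}\big]\;\geq\;\mathbb{E}_{x^-\sim q_{\mathrm{H\text{-}SCL}}(\cdot|x,f)}\big[e^{g(x,x^-)}\big].$$ Then $\mathcal{L}^{(\infty)}_{\mathrm{H\text{-}UCL}}(f)\geq \mathcal{L}^{(\infty)}_{\mathrm{H\text{-}SCL}}(f)$.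
   Context: $1(\mathcal{E})$ denotes the indicator of event $\mathcal{E}$. The loss $\mathcal{L}^{(\infty)}_q(f)$ is the limit as $k\to\infty$ of the InfoNCE contrastive loss $\mathbb{E}_{(x,x^+)\sim p_{\mathrm{sim}}}\mathbb{E}_{x^-_{1:k}\text{ iid}\sim q(\cdot|x)}\big[\log\big(1+e^{-g(x,x^+)}\tfrac1k\sum_{j=1}^k e^{g(x,x^-_j)}\big)\big]$ with $k$ negative samples; $x$ is the anchor, $x^+$ the positive sample, $x^-$ negative samples. *)

From HB Require Import structures.
From mathcomp Require Import all_boot all_order all_algebra.
From mathcomp Require Import all_classical all_reals all_analysis.
Set Implicit Arguments. Unset Strict Implicit. Unset Printing Implicit Defensive.
Import Order.TTheory GRing.Theory Num.Theory.
Local Open Scope classical_set_scope.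
Local Open Scope ring_scope.

Section Defs.
Context {R : realType} {d : nat} {dX : measure_display} {X : measurableType dX}.

Definition simg (gamma : R) (f : X -> 'rV[R]_d) (x x' : X) : R :=
  (\sum_(i < d) f x 0 i * f x' 0 i) / gamma.

Definition on_sphere (v : 'rV[R]_d) : Prop := \sum_(i < d) v 0 i ^+ 2 = 1.

Definition alpha_HUCL (q : probability X R) gamma f (eta : R -> R) (x : X) : \bar R :=
  (\int[q]_(x' in setT) (eta (simg gamma f x x'))%:E)%E.
Definition alpha_HSCL {Y : Type} (y : X -> Y) (q : probability X R) gamma f
  (eta : R -> R) (x : X) : \bar R :=
  (\int[q]_(x' in setT)
     (\1_[set z | y z <> y x] x' * eta (simg gamma f x x'))%:E)%E.
Definition alpha_Hcol {Y : Type} (y : X -> Y) (q : probability X R) gamma f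
  (eta : R -> R) (x : X) : \bar R :=
  (\int[q]_(x' in setT)
     (\1_[set z | y z = y x] x' * eta (simg gamma f x x'))%:E)%E.

(* densities of the conditional negative distributions w.r.t. q_UCL:
   q_H(x^-|x,f) = (weight * eta(g(x,x^-)) * q_UCL(x^-)) / alpha(x,f) *)
Definition dens_HUCL (q : probability X R) gamma f eta (x x' : X) : R :=
  eta (simg gamma f x x') / fine (alpha_HUCL q gamma f eta x).
Definition dens_HSCL {Y : Type} (y : X -> Y) (q : probability X R) gamma f eta
  (x x' : X) : R :=
  \1_[set z | y z <> y x] x' * eta (simg gamma f x x') /
    fine (alpha_HSCL y q gamma f eta x).
Definition dens_Hcol {Y : Type} (y : X -> Y) (q : probability X R) gamma f eta
  (x x' : X) : R :=
  \1_[set z | y z = y x] x' * eta (simg gamma f x x') /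
    fine (alpha_Hcol y q gamma f eta x).

Definition cond_expect (q : probability X R) (dens : X -> X -> R) (x : X)
  (h : X -> R) : \bar R :=
  (\int[q]_(x' in setT) (dens x x' * h x')%:E)%E.

Definition infoNCE_inf (psim : probability (X * X)%type R) (q : probability X R)
  gamma f (dens : X -> X -> R) : \bar R :=
  (\int[psim]_(z in setT)
     (ln (1 + expR (- simg gamma f z.1 z.2) *
        fine (cond_expect q dens z.1 (fun x' => expR (simg gamma f z.1 x')))))%:E)%E.

End Defs.

From HB Require Import structures.
From mathcomp Require Import all_boot all_order all_algebra.
From mathcomp Require Import all_classical all_reals all_analysis.
From mathcomp Require Import lra.
From mathcomp Require Import measurable_realfun lebesgue_integral.
Set Implicit Arguments. Unset Strict Implicit. Unset Printing Implicit Defensive.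
Import Order.TTheory GRing.Theory Num.Theory.
Local Open Scope classical_set_scope.
Local Open Scope ring_scope.

(* Writing [w_N] and [w_E] for the weights [1(y x^- <> y x) eta(g x x^-)] and
   [1(y x^- = y x) eta(g x x^-)], the weight of q_H-UCL is [w_N + w_E].  Hence
   E_{q_H-UCL}[e^g] is the mediant of E_{q_H-SCL}[e^g] and E_{q_Hcol}[e^g], with
   the normalising constants as denominators, and so dominates E_{q_H-SCL}[e^g]
   whenever E_{q_Hcol}[e^g] does.  As [t |-> ln (1 + c t)] is nondecreasing, the
   InfoNCE integrand for q_H-UCL then dominates the one for q_H-SCL pointwise.
   All expectations are finite because [g <= 1/gamma] on the unit sphere. *)

Lemma ler_mediant (R : realFieldType) (a1 a2 b1 b2 : R) :
  0 < b1 -> 0 < b2 -> a1 / b1 <= a2 / b2 -> a1 / b1 <= (a1 + a2) / (b1 + b2).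
Proof.
move=> b1_gt0 b2_gt0.
rewrite ler_pdivlMr // mulrAC ler_pdivrMr // => le12.
rewrite ler_pdivlMr ?addr_gt0 // mulrAC ler_pdivrMr //; nra.
Qed.

Lemma ler_ln1pM (R : realType) (c a b : R) :
  0 <= c -> 0 <= a -> a <= b -> ln (1 + c * a) <= ln (1 + c * b).
Proof.
move=> c_ge0 a_ge0 le_ab.
have b_ge0 : 0 <= b := le_trans a_ge0 le_ab.
by rewrite ler_ln ?posrE ?ltr_pwDl ?mulr_ge0 // lerD2l ler_wpM2l.
Qed.

(* Unlike [ge0_le_integral], no measurability is needed: the integral of a
   nonnegative function is a supremum over its simple minorants. *)
Lemma ge0_le_integralT d (T : measurableType d) (R : realType)
    (mu : {measure set T -> \bar R}) (f g : T -> \bar R) :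
  (forall t, 0 <= f t)%E -> (forall t, f t <= g t)%E ->
  (\int[mu]_(t in setT) f t <= \int[mu]_(t in setT) g t)%E.
Proof.
move=> f_ge0 le_fg.
have g_ge0 t : (0 <= g t)%E := le_trans (f_ge0 t) (le_fg t).
rewrite !ge0_integralTE //.
apply: ereal_sup_le => _ [h le_hf <-]; exists h => //= t.
exact: le_trans (le_hf t) (le_fg t).
Qed.

Section weighted_mean.
Context d (T : measurableType d) (R : realType) (mu : {measure set T -> \bar R}).

Definition mass (w : T -> R) : \bar R := (\int[mu]_(t in setT) (w t)%:E)%E.

Definition wmean (w h : T -> R) : \bar R :=
  (\int[mu]_(t in setT) (w t / fine (mass w) * h t)%:E)%E.

Definition weight (w : T -> R) : Prop :=
  [/\ measurable_fun setT w, forall t, 0 <= w t & (0 < mass w < +oo)%E].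

Lemma weight_mass (w : T -> R) :
  weight w -> mass w = (fine (mass w))%:E /\ 0 < fine (mass w).
Proof.
case=> _ _ /andP[mass_gt0 mass_lty].
have mass_fin : mass w \is a fin_num by rewrite ge0_fin_numE // ltW.
by rewrite fineK // -lte_fin fineK.
Qed.

Lemma massD (w1 w2 : T -> R) : measurable_fun setT w1 -> measurable_fun setT w2 ->
  (forall t, 0 <= w1 t) -> (forall t, 0 <= w2 t) ->
  mass (w1 \+ w2) = (mass w1 + mass w2)%E.
Proof.
move=> mw1 mw2 w1_ge0 w2_ge0; rewrite /mass -ge0_integralD //.
- by move=> t _; rewrite lee_fin.
- exact/measurable_EFinP.
- by move=> t _; rewrite lee_fin.
- exact/measurable_EFinP.
Qed.

Lemma weightD (w1 w2 : T -> R) : weight w1 -> weight w2 -> weight (w1 \+ w2).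
Proof.
move=> [mw1 w1_ge0 /andP[m1_gt0 m1_lty]] [mw2 w2_ge0 /andP[m2_gt0 m2_lty]].
split; first exact: measurable_funD.
- by move=> t; rewrite addr_ge0.
- by rewrite massD // adde_gt0 // lte_add_pinfty.
Qed.

Lemma wmean_ge0 (w h : T -> R) : (forall t, 0 <= w t) -> (forall t, 0 <= h t) ->
  (0 <= wmean w h)%E.
Proof.
move=> w_ge0 h_ge0; apply: integral_ge0 => t _.
rewrite lee_fin !mulr_ge0 ?invr_ge0 ?fine_ge0 //.
by apply: integral_ge0 => ? _; rewrite lee_fin.
Qed.

Variables (h : T -> R) (M : R).
Hypotheses (mh : measurable_fun setT h) (h_ge0 : forall t, 0 <= h t)
  (h_leM : forall t, h t <= M).

Lemma integral_weight_fin_num (w : T -> R) : weight w ->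
  (\int[mu]_(t in setT) (w t * h t)%:E)%E \is a fin_num.
Proof.
move=> [mw w_ge0 /andP[_ mass_lty]].
have wh_ge0 t : 0 <= w t * h t by rewrite mulr_ge0.
rewrite ge0_fin_numE; last by apply: integral_ge0 => t _; rewrite lee_fin.
apply: (@le_lt_trans _ _ (\int[mu]_(t in setT) (`|M|%:E * (w t)%:E))%E).
  apply: ge0_le_integralT => t; rewrite -?EFinM lee_fin // [leRHS]mulrC.
  by rewrite ler_wpM2l // (le_trans (h_leM t)) // ler_norm.
rewrite ge0_integralZl_EFin //.
- by rewrite lte_mul_pinfty.
- by move=> t _; rewrite lee_fin.
- exact/measurable_EFinP.
Qed.

Lemma wmeanE (w : T -> R) : weight w ->
  wmean w h = ((fine (mass w))^-1%:E * \int[mu]_(t in setT) (w t * h t)%:E)%E.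
Proof.
move=> wW; have [_ mass_gt0] := weight_mass wW; case: wW => mw w_ge0 _.
rewrite /wmean -ge0_integralZl_EFin ?invr_ge0 ?(ltW mass_gt0) //.
- by apply: eq_integral => t _; rewrite -EFinM mulrAC mulrC.
- by move=> t _; rewrite lee_fin mulr_ge0.
- exact/measurable_EFinP/measurable_funM.
Qed.

Lemma wmean_fin_num (w : T -> R) : weight w -> wmean w h \is a fin_num.
Proof. by move=> wW; rewrite wmeanE // fin_numM // integral_weight_fin_num. Qed.

Lemma le_wmeanD (w1 w2 : T -> R) : weight w1 -> weight w2 ->
  (wmean w1 h <= wmean w2 h)%E -> (wmean w1 h <= wmean (w1 \+ w2)%R h)%E.
Proof.
move=> w1W w2W.
have [m1E m1_gt0] := weight_mass w1W; have [m2E m2_gt0] := weight_mass w2W.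
case: (w1W) (w2W) => mw1 w1_ge0 _ [mw2 w2_ge0 _].
have mD : fine (mass (w1 \+ w2)) = fine (mass w1) + fine (mass w2).
  by rewrite massD // m1E m2E.
have iD : (\int[mu]_(t in setT) (((w1 \+ w2)%R t) * h t)%:E =
    \int[mu]_(t in setT) (w1 t * h t)%:E + \int[mu]_(t in setT) (w2 t * h t)%:E)%E.
  rewrite -ge0_integralD.
  - by apply: eq_integral => t _; rewrite -EFinD mulrDl.
  - exact: measurableT.
  - by move=> t _; rewrite lee_fin mulr_ge0.
  - exact/measurable_EFinP/measurable_funM.
  - by move=> t _; rewrite lee_fin mulr_ge0.
  - exact/measurable_EFinP/measurable_funM.
rewrite (wmeanE w1W) (wmeanE w2W) (wmeanE (weightD w1W w2W)) iD mD.
rewrite -(fineK (integral_weight_fin_num w1W)) -(fineK (integral_weight_fin_num w2W)).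
rewrite -EFinD -!EFinM !lee_fin ![_^-1 * _]mulrC; exact: ler_mediant.
Qed.

End weighted_mean.

Lemma simg_le_inv (R : realType) (d : nat) (dX : measure_display)
    (X : measurableType dX) (gamma : R) (f : X -> 'rV[R]_d) (x x' : X) :
  0 < gamma -> on_sphere (f x) -> on_sphere (f x') -> simg gamma f x x' <= gamma^-1.
Proof.
move=> gamma_gt0 fx_sph fx'_sph; rewrite /simg -[leRHS]mul1r.
rewrite ler_wpM2r ?invr_ge0 ?(ltW gamma_gt0) // -(ler_pM2l (ltr0n R 2)) mulr_sumr.
have <- : \sum_(i < d) (f x 0 i ^+ 2 + f x' 0 i ^+ 2) = 2 * 1.
  by rewrite big_split /= fx_sph fx'_sph mulr1.
apply: ler_sum => i _.
by have := sqr_ge0 (f x 0 i - f x' 0 i); rewrite sqrrB; lra.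
Qed.

Section hard_negative_sampling.
Context (R : realType) (d : nat) (dX : measure_display) (X : measurableType dX)
  (Y : Type) (y : X -> Y) (q : probability X R) (gamma : R) (f : X -> 'rV[R]_d)
  (eta : R -> R).
Hypotheses (gamma_gt0 : 0 < gamma) (f_sph : forall x, on_sphere (f x))
  (mf : forall i : 'I_d, measurable_fun setT (fun x => f x 0 i))
  (my : forall x : X, measurable [set z | y z = y x])
  (eta_ge0 : forall t, 0 <= eta t) (eta_nd : {homo eta : a b / a <= b}).
Variable x : X.

Let g := simg gamma f x.
Let h x' := expR (g x').
Let wN x' := \1_[set z | y z <> y x] x' * eta (g x').
Let wE x' := \1_[set z | y z = y x] x' * eta (g x').

Let mg : measurable_fun setT g.
Proof.
rewrite /g /simg.
apply: (measurable_funM (f := fun x' => \sum_(i < d) f x 0 i * f x' 0 i)) => //.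
by apply: measurable_sum => i; exact: measurable_funM.
Qed.

Let metag : measurable_fun setT (eta \o g).
Proof. exact: measurableT_comp (nondecreasing_measurable measurableT eta_nd) mg. Qed.

Let weight_wN : (0 < alpha_HSCL y q gamma f eta x < +oo)%E -> weight q wN.
Proof.
move=> alpha_pos; split=> //; last by move=> t; rewrite mulr_ge0.
exact: measurable_funM (measurable_indic (D := setT) (measurableC (my x))) metag.
Qed.

Let weight_wE : (0 < alpha_Hcol y q gamma f eta x < +oo)%E -> weight q wE.
Proof.
move=> alpha_pos; split=> //; last by move=> t; rewrite mulr_ge0.
exact: measurable_funM (measurable_indic (D := setT) (my x)) metag.
Qed.

Let wN_add_wE : (wN \+ wE)%R = eta \o g.
Proof.
apply/funext => t; rewrite /= /wN /wE -mulrDl.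
change [set z | y z <> y x] with (~` [set z | y z = y x]).
by rewrite indicC indicE; case: (_ \in _); rewrite ?add0r ?addr0 mul1r.
Qed.

Lemma fine_cond_expect_HSCL_le_HUCL :
  (0 < alpha_HSCL y q gamma f eta x < +oo)%E ->
  (0 < alpha_Hcol y q gamma f eta x < +oo)%E ->
  (cond_expect q (dens_HSCL y q gamma f eta) x h <=
     cond_expect q (dens_Hcol y q gamma f eta) x h)%E ->
  0 <= fine (cond_expect q (dens_HSCL y q gamma f eta) x h)
    <= fine (cond_expect q (dens_HUCL q gamma f eta) x h).
Proof.
move=> /weight_wN wN_weight /weight_wE wE_weight le_SC.
have h_ge0 t : 0 <= h t := expR_ge0 _.
have h_le t : h t <= expR gamma^-1 by rewrite ler_expR simg_le_inv.
have mh : measurable_fun setT h := measurableT_comp (@measurable_expR R) mg.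
have -> : cond_expect q (dens_HSCL y q gamma f eta) x h = wmean q wN h by [].
have -> : cond_expect q (dens_HUCL q gamma f eta) x h = wmean q (wN \+ wE)%R h.
  by rewrite wN_add_wE.
apply/andP; split.
  by apply/fine_ge0/wmean_ge0 => // t; rewrite mulr_ge0.
apply: fine_le.
- exact (wmean_fin_num mh h_ge0 h_le wN_weight).
- exact (wmean_fin_num mh h_ge0 h_le (weightD wN_weight wE_weight)).
- exact (le_wmeanD mh h_ge0 h_le wN_weight wE_weight le_SC).
Qed.

End hard_negative_sampling.

Theorem lemma1 (R : realType) (d : nat) (dX : measure_display)
  (X : measurableType dX) (Y : Type) (y : X -> Y)
  (psim : probability (X * X)%type R) (q : probability X R)
  (gamma : R) (f : X -> 'rV[R]_d) (eta : R -> R) :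
  0 < gamma ->
  (forall x, on_sphere (f x)) ->
  (forall i : 'I_d, measurable_fun setT (fun x => f x 0 i)) ->
  (forall x : X, measurable [set z | y z = y x]) ->
  (forall t, 0 <= eta t) ->
  {homo eta : a b / a <= b} ->
  (forall x, (0 < alpha_HUCL q gamma f eta x < +oo)%E) ->
  (forall x, (0 < alpha_HSCL y q gamma f eta x < +oo)%E) ->
  (forall x, (0 < alpha_Hcol y q gamma f eta x < +oo)%E) ->
  (forall x, (cond_expect q (dens_HSCL y q gamma f eta) x
                 (fun x' => expR (simg gamma f x x'))
              <= cond_expect q (dens_Hcol y q gamma f eta) x
                 (fun x' => expR (simg gamma f x x')))%E) ->
  (infoNCE_inf psim q gamma f (dens_HSCL y q gamma f eta)
     <= infoNCE_inf psim q gamma f (dens_HUCL q gamma f eta))%E.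
Proof.
move=> gamma_gt0 f_sph mf my eta_ge0 eta_nd _ alphaS alphaC le_SC.
apply: ge0_le_integralT => z.
all: have /andP[ES_ge0 le_SU] := fine_cond_expect_HSCL_le_HUCL gamma_gt0 f_sph mf my
  eta_ge0 eta_nd (alphaS z.1) (alphaC z.1) (le_SC z.1).
- by rewrite lee_fin ln_ge0 // lerDl mulr_ge0 ?expR_ge0.
- by rewrite lee_fin ler_ln1pM ?expR_ge0.
Qed.
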